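(* For any $\tau_f\in(\tau_2^i,\tau_c)$ there exists a unique $\tau_{po}=\tau_{po}(\tau_f)\in(\tau_1^i,\tau_2^i)$ such that, with $\tau_b=\tau_{po}(\tau_f)$, $$p'(\tau_b)=\frac{2h(\tau_b)-2h(\tau_f)}{\tau_b^2-\tau_f^2}<p'(\tau_f)$$ and Liu's extended entropy condition $\frac{2h(\tau_f)-2h(\tau_b)}{\tau_f^2-\tau_b^2}<\frac{2h(\tau_f)-2h(\tau)}{\tau_f^2-\tau^2}$ for all $\tau\in(\tau_b,\tau_f)$ hold. Moreover, $\frac{d\tau_{po}}{d\tau_f}<0$ for $\tau_f\in(\tau_2^i,\tau_c)$.
   Context: The pressure is $p(\tau)=\frac{\mathcal S}{(\tau-1)^\gamma}-\frac{1}{\tau^2}$ for $\tau>1$, with constants $1<\gamma<2$, $\mathcal S>0$, assumed such that there exist $1<\tau_1^i<\tau_2^i$ with $p'<0$ on $(1,\infty)$, $p''>0$ on $(1,\tau_1^i)\cup(\tau_2^i,\infty)$, $p''<0$ on $(\tau_1^i,\tau_2^i)$. The function $h$ satisfies $h'(\tau)=\tau p'(\tau)$. $\tau_c$ denotes the unique $\tau_c\in(\tau_1^i,\infty)$ with $p'(\tau_1^i)=\frac{2h(\tau_c)-2h(\tau_1^i)}{\tau_c^2-(\tau_1^i)^2}$. *)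

From Stdlib Require Import Reals Lra.
From Coquelicot Require Import Coquelicot.
Open Scope R_scope.

Definition pres (S gamma : R) (tau : R) : R :=
  S / Rpower (tau - 1) gamma - 1 / tau ^ 2.

Definition dpres (S gamma : R) (tau : R) : R := Derive (pres S gamma) tau.
Definition ddpres (S gamma : R) (tau : R) : R := Derive (dpres S gamma) tau.

Definition hchord (h : R -> R) (a b : R) : R :=
  (2 * h a - 2 * h b) / (a ^ 2 - b ^ 2).

(* Write F_f(b) = p'(b) (b^2 - f^2) - 2 h(b) + 2 h(f), so that F_f(b) = 0 says that p'(b) is
   the slope of the h-chord between b and f.  Since dF_f(b)/db = p''(b) (b^2 - f^2), F_f
   increases on [tau1, tau2] and decreases on [tau2, f] down to F_f(f) = 0; since
   dF_f(b)/df = 2 f (p'(f) - p'(b)), F_f(tau1) becomes negative after tau1 and can only vanish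
   again at tau_c.  So F_f has exactly one zero tau_po(f) in (tau1, tau2).
   For b = tau_po(f), D(x) = F_x(b) vanishes at x = b and x = f and is negative in between,
   because p' decreases up to tau2 and increases afterwards; D < 0 is Liu's entropy condition,
   and D(tau2) < 0 = D(f) forces p'(b) < p'(f).
   Strict monotonicity of F_f in b makes tau_po continuous, and implicit differentiation of
   F_f(tau_po(f)) = 0 gives tau_po'(f) = 2 f (p'(b) - p'(f)) / (p''(b) (b^2 - f^2)) < 0. *)

From Stdlib Require Import Reals Lra ClassicalEpsilon.
From Coquelicot Require Import Coquelicot.
Open Scope R_scope.

Lemma MVT_open (g g' : R -> R) a b : a < b ->
  (forall x, a <= x <= b -> is_derive g x (g' x)) ->
  exists c, a < c < b /\ g b - g a = g' c * (b - a).
Proof.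
  intros Hab Hg.
  destruct (MVT_cor2 g g' a b Hab) as [c [E Hc]]; [| now exists c].
  intros c Hc; apply is_derive_Reals, Hg, Hc.
Qed.

Lemma MVT_pos_slope (g g' : R -> R) a b : a < b ->
  (forall x, a <= x <= b -> is_derive g x (g' x)) -> g a < g b ->
  exists c, a < c < b /\ 0 < g' c.
Proof.
  intros Hab Hg Hlt. destruct (MVT_open g g' a b Hab Hg) as [c [Hc E]].
  exists c; split; [exact Hc |].
  destruct (Rlt_or_le 0 (g' c)) as [H | H]; [exact H |].
  assert (g' c * (b - a) <= 0) by (apply Rmult_le_0_r; lra). lra.
Qed.

Lemma MVT_nonpos_slope (g g' : R -> R) a b : a < b ->
  (forall x, a <= x <= b -> is_derive g x (g' x)) -> g b <= g a ->
  exists c, a < c < b /\ g' c <= 0.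
Proof.
  intros Hab Hg Hle. destruct (MVT_open g g' a b Hab Hg) as [c [Hc E]].
  exists c; split; [exact Hc |].
  destruct (Rle_or_lt (g' c) 0) as [H | H]; [exact H |].
  assert (0 < g' c * (b - a)) by (apply Rmult_lt_0_compat; lra). lra.
Qed.

Lemma incr_of_derive_pos (g g' : R -> R) a b :
  (forall x, a <= x <= b -> is_derive g x (g' x)) ->
  (forall x, a < x < b -> 0 < g' x) ->
  forall x y, a <= x < y -> y <= b -> g x < g y.
Proof.
  intros Hg Hpos x y Hxy Hyb.
  destruct (Rlt_or_le (g x) (g y)) as [H | H]; [exact H | exfalso].
  destruct (MVT_nonpos_slope g g' x y) as [c [Hc Hc']]; [lra | intros; apply Hg; lra | exact H |].
  specialize (Hpos c ltac:(lra)); lra.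
Qed.

Lemma decr_of_derive_neg (g g' : R -> R) a b :
  (forall x, a <= x <= b -> is_derive g x (g' x)) ->
  (forall x, a < x < b -> g' x < 0) ->
  forall x y, a <= x < y -> y <= b -> g y < g x.
Proof.
  intros Hg Hneg x y Hxy Hyb.
  enough (- g x < - g y) by lra.
  apply (incr_of_derive_pos (fun z => - g z) (fun z => - g' z) a b); [| | lra | lra].
  - intros z Hz; apply (is_derive_opp g), Hg, Hz.
  - intros z Hz; specialize (Hneg z Hz); lra.
Qed.

Lemma IVT_left_open (g : R -> R) a b : a < b ->
  (forall x, a <= x <= b -> continuous g x) -> g a < 0 -> 0 <= g b ->
  exists c, a < c <= b /\ g c = 0.
Proof.
  intros Hab Hg Ha [Hb | Hb]; [| exists b; split; [lra | auto]].
  destruct (Ranalysis5.IVT_interv g a b) as [c [Hc E]]; [| exact Hab | exact Ha | exact Hb |].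
  - intros x Hx; apply continuity_pt_filterlim, Hg, Hx.
  - exists c; split; [| exact E].
    destruct Hc as [[H | H] Hcb]; [lra |]. subst; lra.
Qed.

Lemma continuous_of_is_lim (g : R -> R) (x : R) : is_lim g x (g x) -> continuous g x.
Proof.
  intros Hl P HP. generalize (Hl P HP). unfold filtermap; simpl; unfold locally', within.
  apply filter_imp. intros y Hy.
  destruct (Req_dec y x) as [-> | Hne]; [exact (locally_singleton _ _ HP) | exact (Hy Hne)].
Qed.

Lemma is_derive_is_lim (g : R -> R) (x l : R) :
  is_derive g x l <-> is_lim (fun y => (g y - g x) / (y - x)) x l.
Proof.
  rewrite is_derive_Reals, <- is_lim_spec; split.
  - intros Hd eps. destruct (Hd eps (cond_pos eps)) as [delta Hdelta].
    exists delta. intros y Hy Hyx. change R in y. change (Rabs (y - x) < delta) in Hy.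
    specialize (Hdelta (y - x) ltac:(lra) Hy).
    now replace (x + (y - x)) with y in Hdelta by ring.
  - intros Hl eps Heps. destruct (Hl (mkposreal eps Heps)) as [delta Hdelta].
    exists delta. intros k Hk0 Hk.
    specialize (Hdelta (x + k)). simpl in Hdelta.
    replace (x + k - x) with k in Hdelta by ring.
    apply Hdelta; [| lra].
    change (Rabs (x + k - x) < delta). now replace (x + k - x) with k by ring.
Qed.

Lemma is_derive_mult_vanishing (u v : R -> R) (x a : R) :
  is_derive u x a -> u x = 0 -> continuous v x ->
  is_derive (fun y => u y * v y) x (a * v x).
Proof.
  intros Hu Hu0 Hv. rewrite is_derive_is_lim in *.
  apply (is_lim_ext (fun y => (u y - u x) / (y - x) * v y)).
  - intros y. rewrite Hu0. unfold Rdiv; ring.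
  - apply (is_lim_mult _ _ _ a (v x)); [exact Hu | | exact I].
    apply is_lim_continuity, continuity_pt_filterlim, Hv.
Qed.

(* Caratheodory: [G z - G b = phi z * (z - b)] with [phi] continuous at [b] and [phi b = L]. *)
Lemma is_derive_implicit (G B : R -> R) (x L K : R) :
  continuous B x -> is_derive G (B x) L -> L <> 0 ->
  is_derive (fun y => G (B y)) x K -> is_derive B x (K / L).
Proof.
  intros HB HG HL HGB. set (b := B x) in *.
  set (phi := fun z => if Req_EM_T z b then L else (G z - G b) / (z - b)).
  assert (Hphi_b : phi b = L) by (unfold phi; destruct Req_EM_T; congruence).
  assert (Hphi : forall z, G z - G b = phi z * (z - b)).
  { intros z. unfold phi. destruct Req_EM_T as [-> | Hne]; [ring | field; lra]. }
  assert (Hphi_cont : continuous phi b).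
  { apply continuous_of_is_lim. rewrite Hphi_b.
    rewrite is_derive_is_lim in HG.
    apply (is_lim_ext_loc (fun z => (G z - G b) / (z - b)) phi); [| exact HG].
    simpl; unfold locally', within. apply filter_forall. intros z Hz.
    unfold phi. destruct Req_EM_T; [contradiction | reflexivity]. }
  assert (HphiB : continuous (fun y => phi (B y)) x)
    by exact (continuous_comp B phi x HB Hphi_cont).
  assert (Hnz : locally x (fun y => phi (B y) <> 0)).
  { apply (HphiB (fun z => z <> 0)), open_neq. change (phi b <> 0). congruence. }
  rewrite is_derive_is_lim in HGB |- *.
  apply (is_lim_ext_loc (fun y => (G (B y) - G b) / (y - x) / phi (B y))).
  - simpl; unfold locally', within. generalize Hnz; apply filter_imp. intros y Hy Hyx.
    rewrite Hphi. unfold b. field. split; [lra | exact Hy].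
  - apply (is_lim_div _ _ _ K L); [exact HGB | | now injection 1 | exact I].
    rewrite <- Hphi_b.
    apply (is_lim_continuity (fun y => phi (B y)) x), continuity_pt_filterlim, HphiB.
Qed.

Lemma continuous_increasing_root (F : R -> R -> R) (B : R -> R) (a c x : R) :
  a < B x < c ->
  (forall u, a < u < c -> continuous (fun y => F y u) x) ->
  locally x (fun y => F y (B y) = 0 /\ a <= B y <= c /\
                      forall u v, a <= u -> u < v -> v <= c -> F y u < F y v) ->
  continuous B x.
Proof.
  intros HBx HF Hloc. apply filterlim_locally. intros eps.
  destruct (locally_singleton _ _ Hloc) as (Hroot & _ & Hmono).
  set (b := B x) in *.
  set (e := Rmin eps (Rmin (b - a) (c - b)) / 2).
  pose proof (cond_pos eps).
  pose proof (Rmin_l eps (Rmin (b - a) (c - b))).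
  pose proof (Rmin_r eps (Rmin (b - a) (c - b))).
  pose proof (Rmin_l (b - a) (c - b)). pose proof (Rmin_r (b - a) (c - b)).
  assert (He : 0 < e) by (unfold e; assert (0 < Rmin eps (Rmin (b - a) (c - b)))
                            by (repeat apply Rmin_pos; lra); lra).
  assert (Hea : a < b - e) by (unfold e in *; lra).
  assert (Hec : b + e < c) by (unfold e in *; lra).
  assert (Hlo : F x (b - e) < 0) by (rewrite <- Hroot; apply Hmono; lra).
  assert (Hhi : 0 < F x (b + e)) by (rewrite <- Hroot; apply Hmono; lra).
  assert (Hloc_lo : locally x (fun y => F y (b - e) < 0))
    by exact (HF (b - e) ltac:(lra) _ (open_lt 0 _ Hlo)).
  assert (Hloc_hi : locally x (fun y => 0 < F y (b + e)))
    by exact (HF (b + e) ltac:(lra) _ (open_gt 0 _ Hhi)).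
  generalize (filter_and _ _ Hloc (filter_and _ _ Hloc_lo Hloc_hi)).
  apply filter_imp. intros y ((Hy0 & Hya & Hymono) & Hylo & Hyhi).
  change (Rabs (B y - b) < eps). apply Rabs_lt_between'.
  assert (b - e < B y).
  { destruct (Rlt_or_le (b - e) (B y)) as [Hlt | [Hlt | Heq]]; [exact Hlt | | ].
    - specialize (Hymono (B y) (b - e) ltac:(lra) ltac:(lra) ltac:(lra)). lra.
    - rewrite <- Heq in Hylo. lra. }
  assert (B y < b + e).
  { destruct (Rlt_or_le (B y) (b + e)) as [Hlt | [Hlt | Heq]]; [exact Hlt | | ].
    - specialize (Hymono (b + e) (B y) ltac:(lra) ltac:(lra) ltac:(lra)). lra.
    - rewrite Heq in Hyhi. lra. }
  unfold e in *; lra.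
Qed.

Lemma hchord_sym (h : R -> R) a b : hchord h a b = hchord h b a.
Proof.
  unfold hchord, Rdiv.
  replace (b ^ 2 - a ^ 2) with (- (a ^ 2 - b ^ 2)) by ring.
  rewrite Rinv_opp. ring.
Qed.

Section Tangency.

Variables (q q' h : R -> R) (t1 t2 tc : R).
Hypothesis Ht12 : 1 < t1 < t2.
Hypothesis Hq : forall x, 1 < x -> is_derive q x (q' x).
Hypothesis Hq'_neg : forall x, t1 < x < t2 -> q' x < 0.
Hypothesis Hq'_pos : forall x, t2 < x -> 0 < q' x.
Hypothesis Hh : forall x, 1 < x -> is_derive h x (x * q x).
Hypothesis Htc : forall t, t1 < t -> q t1 = hchord h t t1 -> t = tc.

Definition tangency_defect (f b : R) : R := q b * (b ^ 2 - f ^ 2) - 2 * h b + 2 * h f.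

Lemma tangency_defect_diag f : tangency_defect f f = 0.
Proof. unfold tangency_defect; ring. Qed.

Lemma tangency_defect_eq0 f b :
  b ^ 2 <> f ^ 2 -> tangency_defect f b = 0 <-> q b = hchord h b f.
Proof.
  intros Hbf. unfold tangency_defect, hchord.
  assert (b ^ 2 - f ^ 2 <> 0) by lra.
  split; intros E.
  - apply (Rmult_eq_reg_r (b ^ 2 - f ^ 2)); [| assumption]. field_simplify; lra.
  - rewrite E. field. assumption.
Qed.

Lemma is_derive_tangency_defect_r f b :
  1 < b -> is_derive (tangency_defect f) b (q' b * (b ^ 2 - f ^ 2)).
Proof.
  intros Hb. pose proof (Hq b ltac:(lra)) as Hqb. pose proof (Hh b ltac:(lra)) as Hhb.
  unfold tangency_defect. auto_derive.
  - repeat split; [exists (q' b) | exists (b * q b)]; assumption.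
  - change (Derive (fun x => q x) b) with (Derive q b).
    change (Derive (fun x => h x) b) with (Derive h b).
    rewrite (is_derive_unique _ _ _ Hqb), (is_derive_unique _ _ _ Hhb). ring.
Qed.

Lemma is_derive_tangency_defect_l f b :
  1 < f -> is_derive (fun y => tangency_defect y b) f (2 * f * (q f - q b)).
Proof.
  intros Hf. pose proof (Hh f Hf) as Hhf.
  unfold tangency_defect. auto_derive.
  - exists (f * q f); assumption.
  - change (Derive (fun x => h x) f) with (Derive h f).
    rewrite (is_derive_unique _ _ _ Hhf). ring.
Qed.

Lemma continuous_tangency_defect_l f b : 1 < f -> continuous (fun y => tangency_defect y b) f.
Proof.
  intros Hf. apply (ex_derive_continuous (V := R_NormedModule)).
  eexists; apply is_derive_tangency_defect_l, Hf.
Qed.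

Lemma q_decr x y : t1 <= x < y -> y <= t2 -> q y < q x.
Proof.
  apply (decr_of_derive_neg q q' t1 t2); [intros; apply Hq | intros; apply Hq'_neg]; lra.
Qed.

Lemma q_incr x y : t2 <= x < y -> q x < q y.
Proof.
  intros Hxy. apply (incr_of_derive_pos q q' t2 y); [| | lra | lra].
  - intros; apply Hq; lra.
  - intros; apply Hq'_pos; lra.
Qed.

Lemma tangency_defect_incr f x y : t2 < f -> t1 <= x < y -> y <= t2 ->
  tangency_defect f x < tangency_defect f y.
Proof.
  intros Hf. apply (incr_of_derive_pos _ (fun b => q' b * (b ^ 2 - f ^ 2)) t1 t2).
  - intros b Hb. apply is_derive_tangency_defect_r. lra.
  - intros b Hb. specialize (Hq'_neg b Hb). assert (b ^ 2 < f ^ 2) by nra. nra.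
Qed.

Lemma tangency_defect_decr f x y : t2 <= x < y -> y <= f ->
  tangency_defect f y < tangency_defect f x.
Proof.
  intros Hxy Hyf.
  apply (decr_of_derive_neg _ (fun b => q' b * (b ^ 2 - f ^ 2)) t2 f); [| | lra | lra].
  - intros b Hb. apply is_derive_tangency_defect_r. lra.
  - intros b Hb. specialize (Hq'_pos b ltac:(lra)). assert (b ^ 2 < f ^ 2) by nra. nra.
Qed.

Lemma tangency_defect_t1_neg f : t2 < f < tc -> tangency_defect f t1 < 0.
Proof.
  intros Hf.
  assert (Ht2 : tangency_defect t2 t1 < 0).
  { rewrite <- (tangency_defect_diag t1).
    apply (decr_of_derive_neg (fun y => tangency_defect y t1) (fun y => 2 * y * (q y - q t1))
             t1 t2); [| | lra | lra].
    - intros y Hy. apply is_derive_tangency_defect_l. lra.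
    - intros y Hy. assert (q y < q t1) by (apply q_decr; lra). nra. }
  destruct (Rlt_or_le (tangency_defect f t1) 0) as [Hneg | Hnonneg]; [exact Hneg | exfalso].
  destruct (IVT_left_open (fun y => tangency_defect y t1) t2 f) as [t [Ht Ht0]];
    [lra | intros; apply continuous_tangency_defect_l; lra | exact Ht2 | exact Hnonneg |].
  assert (t = tc); [| lra].
  apply Htc; [lra |]. rewrite hchord_sym.
  apply tangency_defect_eq0; [nra | exact Ht0].
Qed.

Lemma tangency_root_exists f :
  t2 < f < tc -> exists b, t1 < b < t2 /\ tangency_defect f b = 0.
Proof.
  intros Hf.
  assert (Ht2 : 0 < tangency_defect f t2).
  { rewrite <- (tangency_defect_diag f). apply tangency_defect_decr; lra. }
  destruct (IVT_left_open (tangency_defect f) t1 t2) as [b [Hb Hb0]];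
    [lra | | apply tangency_defect_t1_neg, Hf | lra |].
  - intros x Hx. apply (ex_derive_continuous (V := R_NormedModule)).
    eexists; apply is_derive_tangency_defect_r; lra.
  - exists b; split; [| exact Hb0].
    destruct Hb as [Hb1 [Hb2 | ->]]; [lra | lra].
Qed.

Lemma tangency_root_unique f b1 b2 : t2 < f -> t1 <= b1 <= t2 -> t1 <= b2 <= t2 ->
  tangency_defect f b1 = 0 -> tangency_defect f b2 = 0 -> b1 = b2.
Proof.
  intros Hf Hb1 Hb2 E1 E2.
  destruct (Rtotal_order b1 b2) as [H | [H | H]]; [| exact H |].
  - pose proof (tangency_defect_incr f b1 b2 Hf); lra.
  - pose proof (tangency_defect_incr f b2 b1 Hf); lra.
Qed.

Lemma tangency_defect_l_neg_below b x : t1 <= b < x -> x <= t2 -> tangency_defect x b < 0.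
Proof.
  intros Hbx Hx. rewrite <- (tangency_defect_diag b).
  apply (decr_of_derive_neg (fun y => tangency_defect y b) (fun y => 2 * y * (q y - q b)) b t2);
    [| | lra | lra].
  - intros y Hy. apply is_derive_tangency_defect_l. lra.
  - intros y Hy. assert (q y < q b) by (apply q_decr; lra). nra.
Qed.

Lemma q_lt_at_tangency f b : t2 < f -> t1 < b < t2 -> tangency_defect f b = 0 -> q b < q f.
Proof.
  intros Hf Hb Hroot.
  destruct (MVT_pos_slope (fun y => tangency_defect y b) (fun y => 2 * y * (q y - q b)) t2 f)
    as [c [Hc Hc']]; [lra | intros; apply is_derive_tangency_defect_l; lra | |].
  - rewrite Hroot. apply tangency_defect_l_neg_below; lra.
  - assert (q b < q c) by nra. assert (q c < q f) by (apply q_incr; lra). lra.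
Qed.

Lemma tangency_defect_l_neg f b x : t2 < f -> t1 < b < t2 -> tangency_defect f b = 0 ->
  b < x < f -> tangency_defect x b < 0.
Proof.
  intros Hf Hb Hroot Hx.
  destruct (Rle_or_lt x t2) as [Hxt2 | Hxt2]; [apply tangency_defect_l_neg_below; lra |].
  destruct (Rlt_or_le (tangency_defect x b) 0) as [Hneg | Hnonneg]; [exact Hneg | exfalso].
  destruct (MVT_pos_slope (fun y => tangency_defect y b) (fun y => 2 * y * (q y - q b)) t2 x)
    as [c1 [Hc1 Hc1']]; [lra | intros; apply is_derive_tangency_defect_l; lra | |].
  { pose proof (tangency_defect_l_neg_below b t2 ltac:(lra) ltac:(lra)). lra. }
  destruct (MVT_nonpos_slope (fun y => tangency_defect y b) (fun y => 2 * y * (q y - q b)) x f)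
    as [c2 [Hc2 Hc2']]; [lra | intros; apply is_derive_tangency_defect_l; lra | lra |].
  assert (q c1 < q c2) by (apply q_incr; lra).
  assert (q b < q c1) by nra. assert (q c2 <= q b) by nra. lra.
Qed.

Lemma hchord_lt_of_tangency f b x : 0 < b < x -> x < f ->
  tangency_defect f b = 0 -> tangency_defect x b < 0 -> hchord h f b < hchord h f x.
Proof.
  intros Hbx Hxf Hroot Hx.
  rewrite hchord_sym, <- (proj1 (tangency_defect_eq0 f b ltac:(nra)) Hroot).
  unfold tangency_defect, hchord in *.
  assert (0 < f ^ 2 - x ^ 2) by nra.
  apply (Rmult_lt_reg_r (f ^ 2 - x ^ 2)); [assumption |].
  field_simplify; lra.
Qed.

Definition tangency_root (f : R) : R :=
  epsilon (inhabits 0) (fun b => t1 < b < t2 /\ tangency_defect f b = 0).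

Lemma tangency_root_spec f : t2 < f < tc ->
  t1 < tangency_root f < t2 /\ tangency_defect f (tangency_root f) = 0.
Proof. intros Hf. exact (epsilon_spec _ _ (tangency_root_exists f Hf)). Qed.

Lemma continuous_tangency_root f : t2 < f < tc -> continuous tangency_root f.
Proof.
  intros Hf. apply (continuous_increasing_root tangency_defect _ t1 t2).
  - apply tangency_root_spec, Hf.
  - intros u Hu. apply continuous_tangency_defect_l. lra.
  - apply (locally_interval _ f t2 tc (proj1 Hf) (proj2 Hf)).
    intros y Hy1 Hy2; simpl in Hy1, Hy2.
    destruct (tangency_root_spec y (conj Hy1 Hy2)) as [Hb Hroot].
    split; [exact Hroot | split; [lra |]].
    intros u v Hu Huv Hv. apply tangency_defect_incr; lra.
Qed.

Lemma is_derive_tangency_root f : t2 < f < tc ->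
  exists d, is_derive tangency_root f d /\ d < 0.
Proof.
  intros Hf. destruct (tangency_root_spec f Hf) as [Hb Hroot].
  set (b := tangency_root f) in *.
  assert (Hqb : q b < q f) by (apply (q_lt_at_tangency f b); lra).
  assert (HL : 0 < q' b * (b ^ 2 - f ^ 2)).
  { specialize (Hq'_neg b Hb). assert (b ^ 2 < f ^ 2) by nra. nra. }
  exists (2 * f * (q b - q f) / (q' b * (b ^ 2 - f ^ 2))). split.
  2: { apply Rdiv_neg_pos; [nra | exact HL]. }
  apply (is_derive_implicit (tangency_defect f)); [apply continuous_tangency_root, Hf | | lra |].
  { apply is_derive_tangency_defect_r. lra. }
  (* Subtracting [tangency_defect y (tangency_root y) = 0] makes the composite explicit in [y]. *)
  apply (is_derive_ext_loc
           (fun y => (y ^ 2 - f ^ 2) * q (tangency_root y) + (2 * h f - 2 * h y))).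
  { apply (locally_interval _ f t2 tc (proj1 Hf) (proj2 Hf)).
    intros y Hy1 Hy2; simpl in Hy1, Hy2.
    pose proof (proj2 (tangency_root_spec y (conj Hy1 Hy2))) as Hy.
    unfold tangency_defect in *. lra. }
  replace (2 * f * (q b - q f)) with (2 * f * q b + - (2 * (f * q f))) by ring.
  apply (is_derive_plus (V := R_NormedModule)).
  - apply (is_derive_mult_vanishing (fun y => y ^ 2 - f ^ 2) (fun y => q (tangency_root y))).
    + auto_derive; [exact I | ring].
    + ring.
    + apply continuous_comp; [apply continuous_tangency_root, Hf |].
      apply (ex_derive_continuous (V := R_NormedModule)). exists (q' b). apply Hq. lra.
  - pose proof (Hh f ltac:(lra)) as Hhf. auto_derive.
    + exists (f * q f); exact Hhf.
    + change (Derive (fun x => h x) f) with (Derive h f).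
      rewrite (is_derive_unique _ _ _ Hhf). ring.
Qed.

Theorem tangency_root_properties :
  exists tpo : R -> R,
    forall tf, t2 < tf < tc ->
      (t1 < tpo tf < t2
       /\ q (tpo tf) = hchord h (tpo tf) tf
       /\ hchord h (tpo tf) tf < q tf
       /\ (forall tau, tpo tf < tau < tf -> hchord h tf (tpo tf) < hchord h tf tau))
      /\ (forall tb, t1 < tb < t2 ->
            q tb = hchord h tb tf ->
            hchord h tb tf < q tf ->
            (forall tau, tb < tau < tf -> hchord h tf tb < hchord h tf tau) ->
            tb = tpo tf)
      /\ (exists d, is_derive tpo tf d /\ d < 0).
Proof.
  exists tangency_root. intros f Hf.
  destruct (tangency_root_spec f Hf) as [Hb Hroot].
  assert (Htangent : q (tangency_root f) = hchord h (tangency_root f) f)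
    by (apply tangency_defect_eq0; [nra | exact Hroot]).
  split; [| split].
  - split; [exact Hb | split; [exact Htangent | split]].
    + rewrite <- Htangent. apply (q_lt_at_tangency f); lra.
    + intros x Hx. apply hchord_lt_of_tangency; [lra | lra | exact Hroot |].
      apply (tangency_defect_l_neg f); lra.
  - intros tb Htb Etb _ _.
    apply (tangency_root_unique f); [lra | lra | lra | | exact Hroot].
    apply tangency_defect_eq0; [nra | exact Etb].
  - apply is_derive_tangency_root, Hf.
Qed.

End Tangency.

Definition dpres_formula (S gamma t : R) : R :=
  - S * gamma / ((t - 1) * exp (gamma * ln (t - 1))) + 2 / t ^ 3.

Lemma is_derive_pres S gamma t : 1 < t -> is_derive (pres S gamma) t (dpres_formula S gamma t).
Proof.
  intros Ht. unfold pres, dpres_formula, Rpower.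
  pose proof (exp_pos (gamma * ln (t - 1))).
  auto_derive; replace (t + - (1)) with (t - 1) by ring.
  - repeat split; [lra | lra | nra].
  - field. repeat split; lra.
Qed.

Lemma is_derive_dpres S gamma t : 1 < t -> is_derive (dpres S gamma) t (ddpres S gamma t).
Proof.
  intros Ht. apply Derive_correct.
  apply (ex_derive_ext_loc (dpres_formula S gamma)).
  - generalize (open_gt 1 t Ht). apply filter_imp. intros y Hy.
    symmetry. apply is_derive_unique, is_derive_pres, Hy.
  - pose proof (exp_pos (gamma * ln (t + - (1)))).
    unfold dpres_formula. auto_derive. repeat split; try lra.
    + apply Rmult_integral_contrapositive; split; lra.
    + assert (0 < t * (t * (t * 1))) by (repeat apply Rmult_lt_0_compat; lra). lra.
Qed.

Theorem proposition3p3
  (S gamma : R) (h : R -> R) (tau1 tau2 tauc : R)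
  (Hgamma : 1 < gamma < 2) (HS : 0 < S)
  (H12 : 1 < tau1 < tau2)
  (Hp1 : forall tau, 1 < tau -> dpres S gamma tau < 0)
  (Hp2a : forall tau, (1 < tau < tau1 \/ tau2 < tau) -> 0 < ddpres S gamma tau)
  (Hp2b : forall tau, tau1 < tau < tau2 -> ddpres S gamma tau < 0)
  (Hh : forall tau, 1 < tau -> is_derive h tau (tau * dpres S gamma tau))
  (Htauc : tau1 < tauc /\ dpres S gamma tau1 = hchord h tauc tau1)
  (Htauc_uniq : forall t, tau1 < t -> dpres S gamma tau1 = hchord h t tau1 -> t = tauc) :
  exists tpo : R -> R,
    forall tf, tau2 < tf < tauc ->
      (tau1 < tpo tf < tau2
       /\ dpres S gamma (tpo tf) = hchord h (tpo tf) tf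
       /\ hchord h (tpo tf) tf < dpres S gamma tf
       /\ (forall tau, tpo tf < tau < tf -> hchord h tf (tpo tf) < hchord h tf tau))
      /\ (forall tb, tau1 < tb < tau2 ->
            dpres S gamma tb = hchord h tb tf ->
            hchord h tb tf < dpres S gamma tf ->
            (forall tau, tb < tau < tf -> hchord h tf tb < hchord h tf tau) ->
            tb = tpo tf)
      /\ (exists d, is_derive tpo tf d /\ d < 0).
Proof.
  apply (tangency_root_properties (dpres S gamma) (ddpres S gamma) h tau1 tau2 tauc H12).
  - intros x Hx. apply is_derive_dpres, Hx.
  - exact Hp2b.
  - intros x Hx. apply Hp2a. right. exact Hx.
  - exact Hh.
  - exact Htauc_uniq.
Qed.
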